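(* Let $(\varepsilon_k)_{k\ge0}$ be an infinite sequence of real one-particle energies with $\sum_ke^{-\beta\varepsilon_k}<\infty$ for some $\beta>0$. For $N\ge1$ consider the canonical $N$-particle distribution of noninteracting bosons on occupation sequences $(n_k)_{k\ge0}$ of nonnegative integers with $\sum_kn_k=N$, $P_N((n_k))\propto e^{-\beta\sum_k\varepsilon_kn_k}$, and write $\langle n_k\rangle_N$ for its expectations. If $\varepsilon_i<\varepsilon_j$, then $\langle n_j\rangle_N<\langle n_i\rangle_N$. *)

From mathcomp Require Import all_boot all_order all_algebra.
From mathcomp Require Import all_classical all_reals all_analysis.
Set Implicit Arguments. Unset Strict Implicit. Unset Printing Implicit Defensive.
Import Order.TTheory GRing.Theory Num.Theory numFieldNormedType.Exports.
Local Open Scope classical_set_scope.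
Local Open Scope ring_scope.

(* Occupation sequences (n_k)_{k>=0} of nonnegative integers with sum_k n_k = N
   (the sum being finite forces finite support; written out explicitly). *)
Definition occupations (N : nat) : set (nat -> nat) :=
  [set n | exists M : nat, (forall k, (M <= k)%N -> n k = 0%N) /\
                            (\sum_(k < M) n k)%N = N].

(* Total energy sum_k eps_k n_k (a finite sum for finitely supported n). *)
Definition energy {R : realType} (eps : nat -> R) (n : nat -> nat) : R :=
  limn (fun M => \sum_(k < M) eps k * (n k)%:R).

Definition bweight {R : realType} (beta : R) (eps : nat -> R) (n : nat -> nat) : R :=
  expR (- (beta * energy eps n)).

Definition partition_fun {R : realType} (beta : R) (eps : nat -> R) (N : nat)
  : \bar R :=
  esum (occupations N) (fun n => (bweight beta eps n)%:E).

Definition mean_occ {R : realType} (beta : R) (eps : nat -> R) (N k : nat) : R :=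
  fine (esum (occupations N) (fun n => ((n k)%:R * bweight beta eps n)%:E))
  / fine (partition_fun beta eps N).

From mathcomp Require Import all_boot all_order all_algebra.
From mathcomp Require Import all_classical all_reals all_analysis.
From mathcomp Require Import ring.
Import Order.TTheory GRing.Theory Num.Theory numFieldNormedType.Exports.
Local Open Scope classical_set_scope.
Local Open Scope ring_scope.
Set Implicit Arguments. Unset Strict Implicit.

(* Let sigma exchange the levels i and j.  It permutes the occupation
   sequences with N particles, so reindexing the numerators of <n_i>_N and
   <n_j>_N by sigma gives
     2 Z_N (<n_i>_N - <n_j>_N) = sum_n (n_i - n_j) (w(n) - w(sigma n)),
   where w is the Boltzmann weight.  Since
     w(sigma n) = w(n) exp(-beta (eps_j - eps_i) (n_i - n_j)),
   every term is nonnegative, and the term of the sequence with all N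
   particles in level i is positive.  All these sums are finite: with
   x_k = exp(-beta eps_k) and X = sum_k x_k, the weights of the sequences
   supported in [0, M) sum to at most
     prod_(k < M) sum_(a <= N) x_k^a <= prod_(k < M) exp(N (1 + X)^N x_k)
                                     <= exp(N (1 + X)^N X). *)

Definition vanishes_from (n : nat -> nat) (M : nat) :=
  forall k, (M <= k)%N -> n k = 0%N.

Lemma vanishes_from_leq n M M' :
  vanishes_from n M -> (M <= M')%N -> vanishes_from n M'.
Proof. by move=> n0 leMM' k /(leq_trans leMM'); exact: n0. Qed.

Lemma big_ord_vanishing_widen (T : Type) (idx : T) (op : Monoid.law idx)
    (F : nat -> T) M0 M :
  (forall k, (M0 <= k)%N -> F k = idx) -> (M0 <= M)%N ->
  \big[op/idx]_(k < M) F k = \big[op/idx]_(k < M0) F k.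
Proof.
move=> F0 leM0M; rewrite -!(big_mkord xpredT) (big_cat_nat (leq0n M0) leM0M) /=.
rewrite [X in op _ X]big1_seq ?Monoid.mulm1 // => k /andP[_].
by rewrite mem_index_iota => /andP[/F0].
Qed.

Lemma big_ord_D2 (T : Type) (idx : T) (op : Monoid.com_law idx) M
    (F : nat -> T) i j :
  i != j -> (i < M)%N -> (j < M)%N ->
  \big[op/idx]_(k < M) F k =
  op (F i) (op (F j)
    (\big[op/idx]_(k < M | (k != i :> nat) && (k != j :> nat)) F k)).
Proof.
move=> neq_ij ltiM ltjM.
rewrite (bigD1 (Ordinal ltiM)) //= (bigD1 (Ordinal ltjM)) /=.
  by congr (op _ (op _ _)); apply: eq_bigl => k; rewrite -!(inj_eq val_inj).
by rewrite -(inj_eq val_inj) /= eq_sym.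
Qed.

Definition transp (i j k : nat) : nat :=
  if k == i then j else if k == j then i else k.

Lemma transpL i j : transp i j i = j.
Proof. by rewrite /transp eqxx. Qed.

Lemma transpR i j : transp i j j = i.
Proof. by rewrite /transp; case: eqVneq => [->|_]; rewrite ?eqxx. Qed.

Lemma transp_id i j k : k != i -> k != j -> transp i j k = k.
Proof. by rewrite /transp => /negbTE-> /negbTE->. Qed.

Lemma transpK i j : involutive (transp i j).
Proof.
move=> k; have [->|ki] := eqVneq k i; first by rewrite transpL transpR.
have [->|kj] := eqVneq k j; first by rewrite transpR transpL.
by rewrite !transp_id.
Qed.

Lemma big_ord_transp (T : Type) (idx : T) (op : Monoid.com_law idx) M
    (F : nat -> T) i j :
  (i < M)%N -> (j < M)%N ->
  \big[op/idx]_(k < M) F (transp i j k) = \big[op/idx]_(k < M) F k.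
Proof.
move=> ltiM ltjM; have [<-|neq_ij] := eqVneq i j.
  by apply: eq_bigr => k _; rewrite /transp; case: eqP => [->|].
rewrite (big_ord_D2 op (F \o transp i j) neq_ij ltiM ltjM) /=.
rewrite (big_ord_D2 op F neq_ij ltiM ltjM) transpL transpR Monoid.mulmCA.
by congr (op _ (op _ _)); apply: eq_bigr => k /andP[ki kj]; rewrite transp_id.
Qed.

Lemma vanishes_from_transp n M i j : (i < M)%N -> (j < M)%N ->
  vanishes_from n M -> vanishes_from (n \o transp i j) M.
Proof.
move=> ltiM ltjM n0 k leMk /=.
by rewrite transp_id ?n0 // gtn_eqF // (leq_trans _ leMk).
Qed.

Lemma occupations_sum N n M :
  occupations N n -> vanishes_from n M -> (\sum_(k < M) n k)%N = N.
Proof.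
case=> M0 [n0 <-] nM.
rewrite -(big_ord_vanishing_widen _ n0 (leq_maxl M0 M)).
by rewrite (big_ord_vanishing_widen _ nM (leq_maxr M0 M)).
Qed.

Lemma occupations_le N n k : occupations N n -> (n k <= N)%N.
Proof.
case=> M [n0 <-]; have [ltkM|/n0->//] := ltnP k M.
by rewrite (bigD1 (Ordinal ltkM)) //= leq_addr.
Qed.

Lemma occupations_vanish N n m :
  occupations N n -> exists2 M, (m <= M)%N & vanishes_from n M.
Proof.
case=> M [n0 _]; exists (maxn M m); first exact: leq_maxr.
exact: vanishes_from_leq n0 (leq_maxl M m).
Qed.

Lemma occupations_vanish_beyond N n i j : occupations N n ->
  exists M, [/\ (i < M)%N, (j < M)%N & vanishes_from n M].
Proof.
move=> /(occupations_vanish (maxn i j).+1) [M ltM n0]; exists M; split=> //.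
  exact: leq_ltn_trans (leq_maxl i j) ltM.
exact: leq_ltn_trans (leq_maxr i j) ltM.
Qed.

Lemma occupations_seq_vanish N (s : seq (nat -> nat)) :
  {in s, forall n, occupations N n} ->
  exists M, {in s, forall n, vanishes_from n M}.
Proof.
elim: s => [|a s IHs] s_occ; first by exists 0%N.
have [M1 s_M1] : exists M, {in s, forall n, vanishes_from n M}.
  by apply: IHs => n sn; apply: s_occ; rewrite inE sn orbT.
have [M2 leM12 a_M2] := occupations_vanish M1 (s_occ a (mem_head a s)).
exists M2 => n; rewrite inE => /predU1P[->//|sn].
exact: vanishes_from_leq (s_M1 n sn) leM12.
Qed.

Lemma occupations_transp N n i j :
  occupations N n -> occupations N (n \o transp i j).
Proof.
move=> occn; have [M [ltiM ltjM n0]] := occupations_vanish_beyond i j occn.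
exists M; split; first exact: vanishes_from_transp.
by rewrite (big_ord_transp _ n ltiM ltjM) (occupations_sum occn n0).
Qed.

Lemma transp_occupations_bij N i j :
  set_bij (occupations N) (occupations N) (fun n => n \o transp i j).
Proof.
have nK (n : nat -> nat) : (n \o transp i j) \o transp i j = n.
  by apply: funext => k /=; rewrite transpK.
split=> [n|n m _ _ enm|m occm]; first exact: occupations_transp.
  by rewrite -(nK n) enm nK.
by exists (m \o transp i j); [exact: occupations_transp | rewrite nK].
Qed.

Definition condensate (N i : nat) : nat -> nat :=
  fun k => if k == i then N else 0%N.

Lemma condensate_occupations N i : occupations N (condensate N i).
Proof.
exists i.+1; split=> [k ltik|]; first by rewrite /condensate gtn_eqF.
rewrite big_ord_recr big1 /condensate ?eqxx // => k _.
by rewrite /= ltn_eqF.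
Qed.

Section Weights.
Variables (R : realType) (beta : R) (eps : nat -> R).

Lemma energyE n M :
  vanishes_from n M -> energy eps n = \sum_(k < M) eps k * (n k)%:R.
Proof.
move=> n0; apply: lim_near_cst => //; exists M => // m /= leMm.
rewrite (big_ord_vanishing_widen _ (F := fun k => eps k * (n k)%:R) _ leMm) //.
by move=> k /n0->; rewrite mulr0.
Qed.

Lemma bweightE n M : vanishes_from n M ->
  bweight beta eps n = \prod_(k < M) expR (- (beta * eps k)) ^+ n k.
Proof.
move=> n0; rewrite /bweight (energyE n0) mulr_sumr -sumrN expR_sum.
by apply: eq_bigr => k _; rewrite -expRM_natl; congr expR; ring.
Qed.

Lemma energy_transp n M i j : i != j -> (i < M)%N -> (j < M)%N ->
  vanishes_from n M ->
  energy eps (n \o transp i j) =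
  energy eps n + (eps j - eps i) * ((n i)%:R - (n j)%:R).
Proof.
move=> neq_ij ltiM ltjM n0.
rewrite (energyE (vanishes_from_transp ltiM ltjM n0)) (energyE n0).
pose E m k := eps k * (m k)%:R.
rewrite (big_ord_D2 _ (E (n \o transp i j)) neq_ij ltiM ltjM).
rewrite (big_ord_D2 _ (E n) neq_ij ltiM ltjM) /E /= transpL transpR.
rewrite [X in _ + (_ + X) = _](eq_bigr (fun k : 'I_M => E n k)) /E; first ring.
by move=> k /andP[ki kj]; rewrite /= transp_id.
Qed.

Lemma bweight_transp N n i j : i != j -> occupations N n ->
  bweight beta eps (n \o transp i j) =
  bweight beta eps n * expR (- (beta * (eps j - eps i) * ((n i)%:R - (n j)%:R))).
Proof.
move=> neq_ij /(occupations_vanish_beyond i j) [M [ltiM ltjM n0]].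
by rewrite /bweight (energy_transp neq_ij ltiM ltjM n0) -expRD; congr expR; ring.
Qed.

End Weights.

Lemma mul_1B_expRN_gt0 (R : realType) (c t : R) :
  0 < c -> t != 0 -> 0 < t * (1 - expR (- (c * t))).
Proof.
move=> c0; case: (ltrgtP t 0) => // [t0|t0] _.
  by rewrite nmulr_rgt0 // subr_lt0 expR_gt1 oppr_gt0 pmulr_rlt0.
by rewrite pmulr_rgt0 // subr_gt0 expR_lt1 oppr_lt0 pmulr_rgt0.
Qed.

Lemma mul_1B_expRN_ge0 (R : realType) (c t : R) :
  0 < c -> 0 <= t * (1 - expR (- (c * t))).
Proof.
move=> c0; have [->|t0] := eqVneq t 0; first by rewrite mul0r.
exact/ltW/mul_1B_expRN_gt0.
Qed.

Lemma sum_pow_le_expR (R : realType) (y B : R) N : 0 <= y <= B -> 1 <= B ->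
  \sum_(a < N.+1) y ^+ a <= expR (N%:R * B ^+ N * y).
Proof.
move=> /andP[y0 yB] B1; rewrite big_ord_recl expr0.
apply: le_trans (expR_ge1Dx _); rewrite lerD2l.
have -> : N%:R * B ^+ N * y = \sum_(a < N) B ^+ N * y.
  by rewrite sumr_const card_ord -mulrA mulr_natl.
apply: ler_sum => a _; rewrite lift0 exprS mulrC ler_wpM2r //.
apply: le_trans (ler_weXn2l B1 (ltnW (ltn_ord a))).
by apply: lerXn2r; rewrite // nnegrE (le_trans ler01 B1).
Qed.

Section PowerSums.
Variables (R : realType) (x : nat -> R).
Hypothesis x_ge0 : forall k, 0 <= x k.

Lemma sum_prod_pow_le N M (s : seq (nat -> nat)) : uniq s ->
  {in s, forall n, vanishes_from n M /\ forall k, (n k <= N)%N} ->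
  \sum_(n <- s) \prod_(k < M) x k ^+ n k <=
  \prod_(k < M) \sum_(a < N.+1) x k ^+ a.
Proof.
move=> s_uniq s_bd.
(* Encoding the exponent vectors as finite functions 'I_M -> 'I_N.+1, which is
   injective on s, exhibits the left side as a subsum of the expansion of the
   product. *)
pose code (n : nat -> nat) : {ffun 'I_M -> 'I_N.+1} :=
  [ffun k : 'I_M => inord (n k)].
pose W (g : {ffun 'I_M -> 'I_N.+1}) := \prod_(k < M) x k ^+ g k.
have codeK n (k : 'I_M) : n \in s -> code n k = n k :> nat.
  by move=> sn; rewrite ffunE inordK // ltnS; case: (s_bd n sn).
have code_uniq : uniq (map code s).
  rewrite map_inj_in_uniq // => n m sn sm /ffunP e_nm; apply: funext => k.
  have [ltkM|leMk] := ltnP k M; last by rewrite (s_bd n sn).1 ?(s_bd m sm).1.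
  by rewrite -(codeK n (Ordinal ltkM)) // -(codeK m (Ordinal ltkM)) // e_nm.
rewrite (eq_big_seq (W \o code)) => [|n sn]; last first.
  by apply: eq_bigr => k _; rewrite /= codeK.
rewrite -(big_map code xpredT W) bigA_distr_bigA big_uniq //=.
rewrite [leRHS](bigID [in map code s]) /= lerDl.
by apply: sumr_ge0 => g _; apply: prodr_ge0 => k _; exact: exprn_ge0.
Qed.

Lemma prod_sum_pow_le (X : R) N M :
  (forall M, \sum_(k < M) x k <= X) ->
  \prod_(k < M) \sum_(a < N.+1) x k ^+ a <= expR (N%:R * (1 + X) ^+ N * X).
Proof.
move=> sum_le_X; have X0 : 0 <= X by have := sum_le_X 0%N; rewrite big_ord0.
have x_le_1X k : x k <= 1 + X.
  apply: ler_wpDl ler01 (le_trans _ (sum_le_X k.+1)).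
  by rewrite big_ord_recr lerDr sumr_ge0.
set c := N%:R * (1 + X) ^+ N.
have c0 : 0 <= c by rewrite mulr_ge0 // exprn_ge0 // addr_ge0.
apply: (@le_trans _ _ (\prod_(k < M) expR (c * x k))).
  apply: ler_prod => k _; rewrite sumr_ge0 => [|a _]; last exact: exprn_ge0.
  by rewrite /= sum_pow_le_expR // ?x_ge0 ?x_le_1X // lerDl.
rewrite -(@expR_sum _ _ _ xpredT (fun k : 'I_M => c * x k)) ler_expR.
by rewrite -mulr_sumr ler_wpM2l ?sum_le_X.
Qed.

End PowerSums.

Lemma esum_ge_at (R : realType) (T : choiceType) (I : set T) (a : T -> \bar R) t :
  I t -> (a t <= esum I a)%E.
Proof.
move=> It; apply: esum_ge; exists [set t]; last by rewrite fsbig_set1.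
by split=> [|_ ->]; [exact: finite_set1 | exact: It].
Qed.

Section PartitionFunction.
Variables (R : realType) (beta : R) (eps : nat -> R) (N : nat).
Let x k := expR (- (beta * eps k)).
Hypothesis x_summable : cvgn (series x).
Let X := limn (series x).

Lemma occupations_bweight_sum_le (s : seq (nat -> nat)) : uniq s ->
  {in s, forall n, occupations N n} ->
  \sum_(n <- s) bweight beta eps n <= expR (N%:R * (1 + X) ^+ N * X).
Proof.
move=> s_uniq s_occ; have [M s_M] := occupations_seq_vanish s_occ.
rewrite (eq_big_seq (fun n : nat -> nat => \prod_(k < M) x k ^+ n k)); last first.
  by move=> n sn; exact: bweightE (s_M n sn).
have x_ge0 k : 0 <= x k by exact: expR_ge0.
apply: le_trans (prod_sum_pow_le x_ge0 N M _).
  apply: sum_prod_pow_le => // n sn; split; first exact: s_M.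
  by move=> k; apply: occupations_le (s_occ n sn).
move=> M'; rewrite -(big_mkord xpredT).
apply: (nondecreasing_cvgn_le _ x_summable M').
by apply: nondecreasing_series => k _ _; exact: x_ge0.
Qed.

Lemma occupations_esum_fin_num (f : (nat -> nat) -> R) (C : R) : 0 <= C ->
  (forall n, occupations N n -> 0 <= f n <= C * bweight beta eps n) ->
  esum (occupations N) (fun n => (f n)%:E) \is a fin_num.
Proof.
move=> C0 f_bd; rewrite ge0_fin_numE; last first.
  by apply: esum_ge0 => n /f_bd /andP[f0 _]; rewrite lee_fin.
apply: le_lt_trans (ltry (C * expR (N%:R * (1 + X) ^+ N * X))).
apply: ge_ereal_sup => _ [A [finA A_occ] <-].
rewrite fsbig_finite //= sumEFin lee_fin.
set s := finmap.enum_fset _.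
have s_occ : {in s, forall n, occupations N n}.
  by move=> n; rewrite in_fset_set // inE => /A_occ.
apply: le_trans (ler_wpM2l C0 (occupations_bweight_sum_le _ s_occ)) => //.
  rewrite mulr_sumr big_seq [leRHS]big_seq; apply: ler_sum => n sn.
  by case/andP: (f_bd n (s_occ n sn)).
exact: finmap.fset_uniq.
Qed.

Lemma partition_fun_fine_gt0 : 0 < fine (partition_fun beta eps N).
Proof.
apply: fine_gt0; apply/andP; split; last first.
  rewrite -ge0_fin_numE ?esum_ge0 // => [|n _]; last by rewrite lee_fin expR_ge0.
  by apply: (@occupations_esum_fin_num _ 1) => // n _; rewrite mul1r lexx expR_ge0.
apply: lt_le_trans (esum_ge_at _ (condensate_occupations N 0)).
by rewrite lte_fin expR_gt0.
Qed.

End PartitionFunction.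

Section Transposition.
Variables (R : realType) (beta : R) (eps : nat -> R) (N i j : nat).
Hypotheses (beta_gt0 : 0 < beta) (lt_eps_ij : eps i < eps j).
Hypotheses (exp_summable : cvgn (series (fun k => expR (- (beta * eps k)))))
  (N_gt0 : (0 < N)%N).

Let w := bweight beta eps.
Let nsum k := esum (occupations N) (fun n => ((n k)%:R * w n)%:E).
Let gap n := ((n i)%:R - (n j)%:R) * (w n - w (n \o transp i j)).

Let neq_ij : i != j.
Proof. by apply: contraTneq lt_eps_ij => ->; rewrite ltxx. Qed.

Lemma gapE n : occupations N n ->
  gap n = w n * (((n i)%:R - (n j)%:R) *
                 (1 - expR (- (beta * (eps j - eps i) * ((n i)%:R - (n j)%:R))))).
Proof. by move=> occn; rewrite /gap /w (bweight_transp _ _ neq_ij occn); ring. Qed.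

Lemma gap_ge0 n : occupations N n -> 0 <= gap n.
Proof.
move=> occn; rewrite gapE // mulr_ge0 ?expR_ge0 // mul_1B_expRN_ge0 //.
by rewrite mulr_gt0 // subr_gt0.
Qed.

Lemma gap_gt0 n : occupations N n -> n i != n j -> 0 < gap n.
Proof.
move=> occn neq_n; rewrite gapE // mulr_gt0 ?expR_gt0 // mul_1B_expRN_gt0 //.
  by rewrite mulr_gt0 // subr_gt0.
by rewrite subr_eq0 eqr_nat.
Qed.

Lemma nsum_transp k :
  nsum k = esum (occupations N)
    (fun n => ((n (transp i j k))%:R * w (n \o transp i j))%:E).
Proof. exact: reindex_esum (transp_occupations_bij N i j). Qed.

Lemma nsum_gap :
  (nsum i + nsum i =
   nsum j + nsum j + esum (occupations N) (fun n => (gap n)%:E))%E.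
Proof.
rewrite {2}nsum_transp {2}[nsum j]nsum_transp transpL transpR.
have occ_w_ge0 (n m : nat -> nat) k : (0 <= ((n k)%:R * w m)%:E)%E.
  by rewrite lee_fin mulr_ge0 ?expR_ge0.
rewrite -!esumD => [|n _|n /gap_ge0|n _|n _|n _|n _];
  rewrite ?adde_ge0 ?occ_w_ge0 ?lee_fin //.
by apply: eq_esum => n _; rewrite -!EFinD /gap; congr _%:E; ring.
Qed.

Lemma esum_gap_gt0 : (0 < esum (occupations N) (fun n => (gap n)%:E))%E.
Proof.
apply: lt_le_trans (esum_ge_at _ (condensate_occupations N i)).
rewrite lte_fin (gap_gt0 (condensate_occupations N i)) //.
by rewrite /condensate eqxx ifN_eqC // -lt0n.
Qed.

Lemma nsum_lt : fine (nsum j) < fine (nsum i).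
Proof.
have nsum_fin k : nsum k \is a fin_num.
  apply: (occupations_esum_fin_num exp_summable (C := N%:R)) => // n occn.
  by rewrite mulr_ge0 ?expR_ge0 //= ler_wpM2r ?expR_ge0 // ler_nat occupations_le.
have := nsum_gap; rewrite -(fineK (nsum_fin i)) -(fineK (nsum_fin j)) -!EFinD.
move=> sum_gap; suff : ((fine (nsum j) *+ 2)%:E < (fine (nsum i) *+ 2)%:E)%E.
  by rewrite lte_fin ltr_pMn2r.
by rewrite sum_gap lteDl // esum_gap_gt0.
Qed.

End Transposition.

Theorem lemma6 (R : realType) (eps : nat -> R) (beta : R) (hbeta : 0 < beta)
  (hsum : cvgn (series (fun k => expR (- (beta * eps k)))))
  (N : nat) (hN : (1 <= N)%N) (i j : nat) (hij : eps i < eps j) :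
  mean_occ beta eps N j < mean_occ beta eps N i.
Proof.
rewrite /mean_occ ltr_pM2r ?invr_gt0 ?partition_fun_fine_gt0 //.
exact: nsum_lt.
Qed.
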